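(* Let $D$ be a locatable digraph of order $n$ with $\gamma_{OL}(D)=n$. Then $D$ contains no double-forced vertex.
   Context: Digraphs are finite and may contain loops; between two distinct vertices there may be arcs in one or both directions, no repeated arcs. $N^-(v)=\{u: uv\text{ is an arc}\}$ (contains $v$ iff $v$ has a loop). An OLD set of $D$ is a set $S\subseteq V(D)$ such that every vertex has an in-neighbour in $S$ and for every two distinct vertices $u,w$ some vertex of $S$ lies in exactly one of $N^-(u),N^-(w)$. $D$ is locatable if it has an OLD set, and then $\gamma_{OL}(D)$ is the minimum size of an OLD set. A vertex $v$ is domination-forced if some vertex $w$ has $N^-(w)=\{v\}$; $v$ is location-forced if there is a pair $\{x,y\}$ of distinct vertices with $N^-(x)\ominus N^-(y)=\{v\}$ ($\ominus$ = symmetric difference). A vertex is double-forced if it is both domination-forced and location-forced, or if it is location-forced because of two different pairs $\{x,y\}\neq\{x',y'\}$ (i.e. $N^-(x)\ominus N^-(y)=N^-(x')\ominus N^-(y')=\{v\}$). *)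

From mathcomp Require Import all_boot.
Set Implicit Arguments. Unset Strict Implicit. Unset Printing Implicit Defensive.

(* A digraph on a finite vertex type V is given by its arc relation
   [arc u v] meaning "uv is an arc" (loops allowed, no repeated arcs). *)

Section Digraph.
Variables (V : finType) (arc : rel V).

Definition inN (v : V) : {set V} := [set u | arc u v].

Definition OLD (S : {set V}) : Prop :=
  (forall v, exists2 u, u \in S & u \in inN v) /\
  (forall u w, u != w ->
     exists2 s, s \in S & (s \in inN u) != (s \in inN w)).

Definition locatable : Prop := exists S, OLD S.

Definition gamma_OL_is (k : nat) : Prop :=
  (exists2 S, OLD S & #|S| = k) /\ (forall S, OLD S -> k <= #|S|).

Definition symdiff (A B : {set V}) : {set V} := (A :\: B) :|: (B :\: A).

Definition domination_forced (v : V) : Prop :=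
  exists w, inN w = [set v].

Definition loc_pair (v x y : V) : Prop :=
  x != y /\ symdiff (inN x) (inN y) = [set v].

Definition location_forced (v : V) : Prop :=
  exists x y, loc_pair v x y.

Definition double_forced (v : V) : Prop :=
  (domination_forced v /\ location_forced v) \/
  (exists x y x' y', loc_pair v x y /\ loc_pair v x' y' /\
     [set x; y] != [set x'; y']).

End Digraph.

From mathcomp Require Import all_boot all_algebra.

Set Implicit Arguments.
Unset Strict Implicit.
Unset Printing Implicit Defensive.

Local Open Scope ring_scope.

(* If gamma_OL(D) = n, the whole vertex set is a minimum OLD set, so no set
   V \ {v} is OLD: every vertex v is domination- or location-forced.  Over F_2
   this says that every unit vector [e_v] is a sum of one or two rows of the
   in-neighbourhood matrix M, hence M is invertible.  A double-forced vertex
   would give two different vertex sets with the same image under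
   A |-> sum_(x in A) N^-(x), contradicting the injectivity of M. *)

Section Digraph.
Variables (V : finType) (arc : rel V).

Lemma in_symdiff (A B : {set V}) x :
  (x \in symdiff A B) = ((x \in A) != (x \in B)).
Proof. by rewrite !inE; case: (x \in A); case: (x \in B). Qed.

Lemma symdiff_set1 (x y : V) : x != y -> symdiff [set x] [set y] = [set x; y].
Proof.
move=> neq_xy; apply/setP => z; rewrite in_symdiff !inE.
by case: (eqVneq z x) => [->|_]; rewrite ?(negbTE neq_xy) //; case: (z == y).
Qed.

Lemma set1_of_setD1_eq0 (A : {set V}) v :
  A != set0 -> A :\ v = set0 -> A = [set v].
Proof.
move=> A_neq0 /eqP; rewrite setD_eq0 subset1 (negbTE A_neq0) orbF.
by move/eqP.
Qed.

Lemma OLD_superset (S T : {set V}) : S \subset T -> OLD arc S -> OLD arc T.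
Proof.
move=> /subsetP sST [dom loc]; split=> [v|u w neq_uw].
  by have [s /sST] := dom v; exists s.
by have [s /sST] := loc u w neq_uw; exists s.
Qed.

Lemma forced_of_not_OLD_setD1 v :
  OLD arc setT -> ~ OLD arc (setT :\ v) ->
  domination_forced arc v \/ location_forced arc v.
Proof.
move=> [domT locT] notOLD.
case: (boolP [exists w, inN arc w == [set v]]) => [/existsP[w /eqP]|noDom].
  by left; exists w.
case: (boolP [exists x, exists y,
              (x != y) && (symdiff (inN arc x) (inN arc y) == [set v])]).
  by move=> /existsP[x /existsP[y /andP[neq_xy /eqP]]]; right; exists x, y.
move=> noLoc; exfalso; apply: notOLD; split=> [w|x y neq_xy].
  have /set0Pn[u]: inN arc w :\ v != set0.
    apply/eqP => /(set1_of_setD1_eq0 _) Nw; apply: (negP noDom).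
    apply/existsP; exists w; rewrite Nw //.
    by have [u _ Nu] := domT w; apply/set0Pn; exists u.
  rewrite in_setD1 => /andP[neq_uv Nu].
  by exists u; rewrite // !inE neq_uv.
have /set0Pn[s]: symdiff (inN arc x) (inN arc y) :\ v != set0.
  apply/eqP => /(set1_of_setD1_eq0 _) Dxy; apply: (negP noLoc).
  apply/existsP; exists x; apply/existsP; exists y; rewrite neq_xy Dxy //=.
  have [s _ Ds] := locT x y neq_xy.
  by apply/set0Pn; exists s; rewrite in_symdiff.
rewrite in_setD1 in_symdiff => /andP[neq_sv Ds].
by exists s; rewrite // !inE neq_sv.
Qed.

Definition indic (A : {set V}) : 'rV['F_2]_#|V| := \row_j (enum_val j \in A)%:R.

Lemma indicD (A B : {set V}) : indic (symdiff A B) = indic A + indic B.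
Proof.
apply/rowP => j; rewrite !mxE in_symdiff.
by case: (enum_val j \in A); case: (enum_val j \in B); apply/eqP.
Qed.

Lemma indic1 (x : V) : indic [set x] = 'e_(enum_rank x).
Proof.
apply/rowP => j.
by rewrite !mxE in_set1 -{1}(enum_rankK x) (inj_eq enum_val_inj).
Qed.

Lemma indic_inj : injective indic.
Proof.
move=> A B eqAB; apply/setP => x.
have := congr1 (fun r : 'rV_#|V| => r 0 (enum_rank x)) eqAB.
by rewrite !mxE enum_rankK; case: (x \in A); case: (x \in B).
Qed.

Definition inmx : 'M['F_2]_#|V| := \matrix_i indic (inN arc (enum_val i)).

Lemma indic1_mul x : indic [set x] *m inmx = indic (inN arc x).
Proof. by rewrite indic1 -rowE rowK enum_rankK. Qed.

Lemma indic_loc_pair v x y :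
  loc_pair arc v x y -> indic [set x; y] *m inmx = indic [set v].
Proof.
by move=> [neq_xy <-]; rewrite -symdiff_set1 // !indicD mulmxDl !indic1_mul.
Qed.

Lemma indic_forced_sub v :
  domination_forced arc v \/ location_forced arc v ->
  (indic [set v] <= inmx)%MS.
Proof.
have rowsub x : (indic (inN arc x) <= inmx)%MS.
  by rewrite -indic1_mul submxMl.
case=> [[w <-]|[x [y [_ <-]]]]; first exact: rowsub.
by rewrite indicD addmx_sub.
Qed.

Lemma inmx_full :
  (forall v, domination_forced arc v \/ location_forced arc v) ->
  row_full inmx.
Proof.
move=> forced; rewrite -sub1mx; apply/row_subP => j.
by rewrite row1 -(enum_valK j) -indic1 indic_forced_sub.
Qed.

Lemma indic_mul_inj :
  row_full inmx -> injective (fun A => indic A *m inmx).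
Proof.
move=> full A B /(row_free_inj _) eqAB; apply: indic_inj; apply: eqAB.
by rewrite row_free_unit -row_full_unit.
Qed.

End Digraph.

Theorem proposition11 (V : finType) (arc : rel V) :
  locatable arc -> gamma_OL_is arc #|V| ->
  forall v : V, ~ double_forced arc v.
Proof.
move=> _ [[S OLD_S _] minOLD] v.
have OLD_T := OLD_superset (subsetT S) OLD_S.
have forced u : domination_forced arc u \/ location_forced arc u.
  apply: forced_of_not_OLD_setD1 OLD_T _ => /minOLD.
  by rewrite -cardsT (cardsD1 u) in_setT ltnn.
have inj := indic_mul_inj (inmx_full forced).
case=> [[[w Nw] [x [y pxy]]]|[x [y [x' [y' [pxy [pxy' neq]]]]]]].
  have /inj/(congr1 (fun A : {set V} => #|A|)) :
      indic [set w] *m inmx arc = indic [set x; y] *m inmx arc.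
    by rewrite indic1_mul Nw (indic_loc_pair pxy).
  by rewrite cards1 cards2; case: pxy => ->.
apply/negP: neq; apply/negPn/eqP/inj.
by rewrite (indic_loc_pair pxy) (indic_loc_pair pxy').
Qed.
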